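(* Let $G=(V,E)$ be a connected, locally finite graph and let $\sigma^0\in\{-1,+1\}^V$. Let $\gamma$ be a finite contour with respect to $\sigma^0$, and let $\sigma\in\{-1,+1\}^V$ be the configuration with $\sigma_v=-\sigma^0_v$ for $v\in V(\gamma)$ and $\sigma_v=\sigma^0_v$ for $v\notin V(\gamma)$. Then $$H(\sigma)-H(\sigma^0)\ \geq\ \big({\rm IC}_G-2\,\delta_{\rm broken}(\sigma^0)\big)\,|\gamma|,$$ where $H(\sigma)-H(\sigma^0):=\sum_{\{v,w\}\in E}\big(\mathbf 1_{\sigma_v\neq\sigma_w}-\mathbf 1_{\sigma^0_v\neq\sigma^0_w}\big)$ (a finite sum, since only edges with an endpoint in $V(\gamma)$ contribute).
   Context: A contour with respect to $\sigma^0$ is a connected subgraph $\gamma$ of $G$ (on which the configuration is taken to be flipped relative to $\sigma^0$). $|\gamma|$ denotes the number of vertices of $\gamma$. For a finite subgraph $H$, $\partial H$ is the set of edges $(v,w)\in E$ with $v\in V(H)$, $w\notin V(H)$, and the isoperimetric constant is ${\rm IC}_G=\inf\{|\partial H|/|H|: H \text{ finite non-empty subgraph of }G\}$. For a configuration $\eta$, its broken bonds are the edges $\{v,w\}$ with $\eta_v\eta_w=-1$, and $\delta_{\rm broken}(\eta)$ is the maximum degree of a vertex in the subgraph formed by the broken bonds, i.e. the maximal number of broken bonds incident to a single vertex. *)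

From HB Require Import structures.
From mathcomp Require Import all_boot all_order all_algebra.
From mathcomp Require Import finmap.
From mathcomp Require Import all_classical all_reals.
From mathcomp Require Import ereal.

Set Implicit Arguments.
Unset Strict Implicit.
Unset Printing Implicit Defensive.

Import Order.TTheory GRing.Theory Num.Theory.
Local Open Scope ring_scope.

(* A locally finite simple graph on a (possibly infinite) vertex type V is
   given by its neighbourhood function  N : V -> {fset V}  (finite
   neighbourhoods = local finiteness), required symmetric and irreflexive
   in the theorem statement.  Edges are the pairs {v,w} with w \in N v. *)

Section Graph.
Variable V : choiceType.
Variable N : V -> {fset V}.

Inductive reach (P : pred V) : V -> V -> Prop :=
| reach_refl v : P v -> reach P v v
| reach_step u v w : reach P u v -> w \in N v -> P w -> reach P u w.

Definition graph_connected : Prop := forall v w : V, reach predT v w.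

(* A (finite) contour is a finite connected subgraph; only its vertex set
   Gamma matters.  Connected = nonempty and its induced subgraph connected
   (a connected subgraph with vertex set Gamma exists iff this holds). *)
Definition is_finite_contour (Gamma : {fset V}) : Prop :=
  Gamma != fset0 /\
  forall u v, u \in Gamma -> v \in Gamma ->
    reach (fun x => x \in Gamma) u v.

Definition boundary_size (A : {fset V}) : nat :=
  \sum_(v <- A) #|` [fset w in N v | w \notin A]%fset |.

Definition IC (R : realType) : R :=
  inf [set (boundary_size A)%:R / (#|` A|)%:R
        | A in [set A : {fset V} | A != fset0]]%classic.

Definition broken_deg (eta : V -> bool) (v : V) : nat :=
  #|` [fset w in N v | eta v != eta w]%fset |.

Definition delta_broken (R : realType) (eta : V -> bool) : \bar R :=
  ereal_sup [set ((broken_deg eta v)%:R : R)%:E | v in [set: V]]%classic.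

Definition flip (sigma0 : V -> bool) (Gamma : {fset V}) : V -> bool :=
  fun v => if v \in Gamma then ~~ sigma0 v else sigma0 v.

Definition closed_nbhd (Gamma : {fset V}) : {fset V} :=
  (Gamma `|` \big[@fsetU _/fset0]_(v <- Gamma) N v)%fset.

(* Only edges with an endpoint in Gamma (where sigma and sigma0 differ)
   can contribute; every such edge has both endpoints in closed_nbhd Gamma,
   and the sum over unordered edges is half the sum over ordered pairs
   (v,w) with w \in N v. *)
Definition Hdiff (R : realType) (Gamma : {fset V}) (sigma sigma0 : V -> bool) : R :=
  (\sum_(v <- closed_nbhd Gamma) \sum_(w <- N v)
     (((sigma v != sigma w)%:R : R) - ((sigma0 v != sigma0 w)%:R : R))) / 2.

End Graph.

From HB Require Import structures.
From mathcomp Require Import all_boot all_order all_algebra.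
From mathcomp Require Import finmap.
From mathcomp Require Import all_classical all_reals.
From mathcomp Require Import ereal.
From mathcomp Require Import lra.

Set Implicit Arguments.
Unset Strict Implicit.
Unset Printing Implicit Defensive.

Import Order.TTheory GRing.Theory Num.Theory.
Local Open Scope ring_scope.

(* Flipping Gamma changes only the bonds of the edge boundary of Gamma: a
   satisfied bond becomes broken (+1) and a broken one becomes satisfied (-1).
   So H(sigma) - H(sigma0) = |dGamma| - 2 #(broken bonds of dGamma), and
   |dGamma| >= IC |Gamma| while the broken boundary bonds number at most
   sum_(v in Gamma) (broken degree of v) <= delta_broken |Gamma|. *)

Lemma big_fset_memC (R : Type) (idx : R) (op : Monoid.com_law idx)
    (T : choiceType) (A B : {fset T}) (F : T -> R) :
  \big[op/idx]_(x <- A | x \in B) F x = \big[op/idx]_(x <- B | x \in A) F x.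
Proof. by apply: eq_fbig_cond => // x; rewrite !inE andbC. Qed.

Lemma card_fsep_sum1 (T : choiceType) (A : {fset T}) (P : pred T) :
  #|` [fset x in A | P x]%fset| = (\sum_(x <- A | P x) 1)%N.
Proof. by rewrite card_fset_sum1 [RHS]big_fset_condE. Qed.

Section Graph.
Variables (V : choiceType) (N : V -> {fset V}).
Hypothesis N_sym : forall v w : V, (w \in N v) = (v \in N w).

Lemma closed_nbhd_self (Gamma : {fset V}) :
  {subset Gamma <= closed_nbhd N Gamma}.
Proof. by move=> v vG; rewrite in_fsetU vG. Qed.

Lemma closed_nbhd_nbr (Gamma : {fset V}) v w :
  v \in Gamma -> w \in N v -> w \in closed_nbhd N Gamma.
Proof.
move=> vG wNv; rewrite /closed_nbhd in_fsetU; apply/orP; right.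
by apply/bigfcupP; exists v; rewrite ?vG.
Qed.

Lemma sum_nbr_sym (R : nmodType) (A B : {fset V}) (P : pred V)
    (F : V -> V -> R) :
  \sum_(v <- A | P v) \sum_(w <- N v | w \in B) F v w =
  \sum_(w <- B) \sum_(v <- N w | (v \in A) && P v) F v w.
Proof.
under eq_bigr do rewrite big_fset_memC.
rewrite (exchange_big_dep xpredT) //=; apply: eq_bigr => w _.
apply: eq_fbig_cond => // v; rewrite !inE /= -N_sym.
by apply/and3P/and3P => -[*].
Qed.

Section Flip.
Variables (R : realType) (sigma0 : V -> bool) (Gamma : {fset V}).

(* Energy change of the bond {v, w} when exactly one of its endpoints flips. *)
Let bond_gain (v w : V) : R := 1 - 2 * (sigma0 v != sigma0 w)%:R.

Lemma sum_nbr_flip_diff v :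
  \sum_(w <- N v) (((flip sigma0 Gamma v != flip sigma0 Gamma w)%:R : R)
                   - (sigma0 v != sigma0 w)%:R) =
  if v \in Gamma then \sum_(w <- N v | w \notin Gamma) bond_gain v w
  else \sum_(w <- N v | w \in Gamma) bond_gain v w.
Proof.
rewrite /flip /bond_gain; case: ifP => vG; rewrite [RHS]big_mkcond /=;
  apply: eq_bigr => w _; case: (w \in Gamma);
  by case: (sigma0 v); case: (sigma0 w); rewrite /=; lra.
Qed.

Lemma Hdiff_flip :
  Hdiff N R Gamma (flip sigma0 Gamma) sigma0 =
  \sum_(v <- Gamma) \sum_(w <- N v | w \notin Gamma) bond_gain v w.
Proof.
set S := \sum_(v <- Gamma) _.
(* Hdiff counts every boundary bond once from each endpoint. *)
have from_inside : \sum_(v <- closed_nbhd N Gamma | v \in Gamma)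
    \sum_(w <- N v | w \notin Gamma) bond_gain v w = S.
  apply: eq_fbig_cond => // v; rewrite !inE /= andbT andbC.
  by case vG: (v \in Gamma); rewrite // closed_nbhd_self.
have from_outside : \sum_(v <- closed_nbhd N Gamma | v \notin Gamma)
    \sum_(w <- N v | w \in Gamma) bond_gain v w = S.
  rewrite sum_nbr_sym; apply: eq_big_seq => v vG.
  apply: eq_fbig_cond => [w | w _ _]; last by rewrite /bond_gain eq_sym.
  rewrite !inE /=; case wN: (w \in N v) => //=.
  by move: (closed_nbhd_nbr vG wN); rewrite in_fsetU => ->.
rewrite /Hdiff; under eq_bigr do rewrite sum_nbr_flip_diff.
rewrite (bigID (mem Gamma)) /=.
under [X in X + _]eq_bigr => v vG do rewrite vG.
under [X in _ + X]eq_bigr => v /negbTE vG do rewrite vG.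
rewrite from_inside from_outside; lra.
Qed.

Lemma Hdiff_flip_ge :
  (boundary_size N Gamma)%:R
    - 2 * \sum_(v <- Gamma) ((broken_deg N sigma0 v)%:R : R)
    <= Hdiff N R Gamma (flip sigma0 Gamma) sigma0.
Proof.
rewrite Hdiff_flip /boundary_size natr_sum mulr_sumr -sumrB.
apply: ler_sum => v _.
rewrite /broken_deg !card_fsep_sum1 !natr_sum.
rewrite [X in X - _]big_mkcond [X in _ * X]big_mkcond [X in _ <= X]big_mkcond.
rewrite mulr_sumr -sumrB; apply: ler_sum => w _ /=; rewrite /bond_gain.
by case: (w \in Gamma); case: (sigma0 v != sigma0 w); rewrite /=; lra.
Qed.
End Flip.

Section Bounds.
Variable R : realType.

Lemma IC_mul_card_le (A : {fset V}) :
  A != fset0 -> IC N R * (#|` A|)%:R <= (boundary_size N A)%:R.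
Proof.
move=> A0; rewrite -ler_pdivlMr ?ltr0n ?lt0n ?cardfs_eq0 //.
apply: ge_inf; last by exists A.
by exists 0 => _ [B _ <-]; rewrite divr_ge0.
Qed.

Lemma broken_deg_le_delta_broken (eta : V -> bool) v :
  (((broken_deg N eta v)%:R : R)%:E <= delta_broken N R eta)%E.
Proof. by apply: ereal_sup_ubound; exists v. Qed.

Lemma sum_broken_deg_le (eta : V -> bool) (A : {fset V}) (d : R) :
  delta_broken N R eta = d%:E ->
  \sum_(v <- A) ((broken_deg N eta v)%:R : R) <= (#|` A|)%:R * d.
Proof.
move=> deltaE; rewrite card_fset_sum1 natr_sum mulr_suml.
apply: ler_sum => v _.
by rewrite mulr1n mul1r -lee_fin -deltaE broken_deg_le_delta_broken.
Qed.

End Bounds.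
End Graph.

Theorem lemma3p3 (R : realType) (V : choiceType) (N : V -> {fset V})
  (N_sym : forall v w : V, (w \in N v) = (v \in N w))
  (N_irr : forall v : V, v \notin N v)
  (G_conn : graph_connected N)
  (sigma0 : V -> bool) (Gamma : {fset V})
  (Hcontour : is_finite_contour N Gamma) :
  (((IC N R)%:E - 2%:E * delta_broken N R sigma0) * ((#|` Gamma|)%:R : R)%:E
     <= (Hdiff N R Gamma (flip sigma0 Gamma) sigma0)%:E)%E.
Proof.
have [Gamma0 _] := Hcontour.
have card_gt0 : (0 < #|` Gamma|)%N by rewrite lt0n cardfs_eq0.
have Hdiff_ge := Hdiff_flip_ge N_sym R sigma0 Gamma.
have IC_le := IC_mul_card_le N R Gamma0.
case deltaE: (delta_broken N R sigma0) => [d | |].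
- have := sum_broken_deg_le Gamma deltaE.
  rewrite -EFinM lee_fin mulrBl; lra.
- by rewrite gt0_muley ?lte_fin //= gt0_mulNye ?lte_fin ?ltr0n // leNye.
- have [v0 _] := fset0Pn _ Gamma0.
  by have := broken_deg_le_delta_broken N R sigma0 v0; rewrite deltaE leeNy_eq.
Qed.
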